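(* Let $\tilde G=(\mathbf H\oplus\mathbf V,\ast)$ be the Lie group defined below, with Lie algebra $\mathfrak g$, and let $\delta:\mathfrak g\to\mathfrak g\wedge\mathfrak g$ be a 1-cocycle making $(\mathfrak g,\delta)$ a Lie bialgebra. Suppose that in the dual Lie algebra $\mathfrak g^*=\mathbf H^*\oplus\mathbf V^*$ (with bracket $\delta^*$) the subspace $\mathbf H^*$ is an abelian subalgebra. Then for the (unique) Poisson–Lie structure on $\tilde G$ whose linearization at the identity is $\delta$, one has $\{h^i,h^j\}=0$ identically on all of $\tilde G$, for all $i,j$, where $h^i$ are the linear coordinate functions on $\tilde G$ coming from a basis of $\mathbf H^*$.
   Context: $\mathbf H$ and $\mathbf V$ are finite-dimensional real vector spaces; $\mathbf H$ is regarded as a commutative Lie group under addition. $\rho_1,\rho_2:\mathbf H\to GL(\mathbf V)$ are two representations (group homomorphisms) whose images commute with each other. $\tilde G$ is the set $\mathbf H\oplus\mathbf V$ with the group law $(h,v)\ast(h',v')=(h+h',\ \rho_1(h)v'+\rho_2(h')^{-1}v)$; its unit is $(0,0)$ and $(h,v)^{-1}=(-h,-\rho_1(-h)\rho_2(h)v)$. Since $\tilde G$ is diffeomorphic to a vector space (connected and simply connected), every Lie bialgebra structure $\delta$ on its Lie algebra integrates to a unique Poisson–Lie structure on $\tilde G$ whose linearization at the identity is $\delta$. The linear functions $h^i$ (from $\mathbf H^*$) and $v^m$ (from $\mathbf V^*$) are the coordinate functions on $\tilde G$. *)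

From HB Require Import structures.
From mathcomp Require Import all_boot all_order all_algebra.
From mathcomp Require Import all_classical all_reals all_analysis.
Set Implicit Arguments. Unset Strict Implicit. Unset Printing Implicit Defensive.
Import Order.TTheory GRing.Theory Num.Theory.
Import numFieldNormedType.Exports.
Local Open Scope ring_scope.

Fixpoint Ck (R : realType) (V W : normedModType R) (k : nat) (f : V -> W) : Prop :=
  match k with
  | 0 => forall x, differentiable f x
  | k.+1 => (forall x, differentiable f x) /\ forall v : V, Ck k ('D_v f)
  end.
Definition smooth (R : realType) (V W : normedModType R) (f : V -> W) : Prop :=
  forall k, Ck k f.

(* A point x : 'cV_(n+m) is the pair (usubmx x, dsubmx x) in H (+) V,
   with H = 'cV_n and V = 'cV_m.  The unit is 0. *)
Section Group.
Variables (R : realType) (n m : nat).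
Variables (rho1 rho2 : 'cV[R]_n -> 'M[R]_m).

Definition gmul (x y : 'cV[R]_(n + m)) : 'cV[R]_(n + m) :=
  col_mx (usubmx x + usubmx y)
         (rho1 (usubmx x) *m dsubmx y + invmx (rho2 (usubmx y)) *m dsubmx x).
End Group.

Definition is_rep (R : realType) (n m : nat) (rho : 'cV[R]_n -> 'M[R]_m) : Prop :=
  [/\ forall h, rho h \in unitmx,
      rho 0 = 1%:M,
      forall h h', rho (h + h') = rho h *m rho h'
    & smooth rho].

Definition evec (R : realType) (N : nat) (k : 'I_N) : 'cV[R]_N := delta_mx k 0.
Arguments evec {R N} k.

Definition jac (R : realType) (N : nat) (F : 'cV[R]_N -> 'cV[R]_N) (x : 'cV[R]_N)
  : 'M[R]_N := \matrix_(i, j) ('D_(evec j) F x) i 0.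

Definition pbr (R : realType) (N : nat) (pi : 'cV[R]_N -> 'M[R]_N)
  (f g : 'cV[R]_N -> R) : 'cV[R]_N -> R :=
  fun x => \sum_(k < N) \sum_(l < N) 'D_(evec k) f x * pi x k l * 'D_(evec l) g x.

Definition poisson_bivector (R : realType) (N : nat) (pi : 'cV[R]_N -> 'M[R]_N) : Prop :=
  [/\ smooth pi,
      forall x, (pi x)^T = - pi x
    & forall f g k : 'cV[R]_N -> R, smooth f -> smooth g -> smooth k ->
        forall x, pbr pi f (pbr pi g k) x + pbr pi g (pbr pi k f) x
                  + pbr pi k (pbr pi f g) x = 0].

(* multiplicativity: pi(xy) = (L_x)_* pi(y) + (R_y)_* pi(x) *)
Definition pl_multiplicative (R : realType) (N : nat) (mul : 'cV[R]_N -> 'cV[R]_N -> 'cV[R]_N)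
  (pi : 'cV[R]_N -> 'M[R]_N) : Prop :=
  forall x y,
    pi (mul x y) = jac (mul x) y *m pi y *m (jac (mul x) y)^T
                 + jac (mul^~ y) x *m pi x *m (jac (mul^~ y) x)^T.

(* Lie bracket on g = T_0 G (coordinates centred at the unit 0):
   [X,Y] = B(X,Y) - B(Y,X),  B = mixed second derivative of mul at (0,0). *)
Definition mixed2 (R : realType) (N : nat) (mul : 'cV[R]_N -> 'cV[R]_N -> 'cV[R]_N)
  (X Y : 'cV[R]_N) : 'cV[R]_N :=
  'D_X (fun x => 'D_Y (fun y => mul x y) 0) 0.
Definition liebr (R : realType) (N : nat) (mul : 'cV[R]_N -> 'cV[R]_N -> 'cV[R]_N)
  (X Y : 'cV[R]_N) : 'cV[R]_N := mixed2 mul X Y - mixed2 mul Y X.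

Definition admx (R : realType) (N : nat) (mul : 'cV[R]_N -> 'cV[R]_N -> 'cV[R]_N)
  (X : 'cV[R]_N) : 'M[R]_N := \matrix_(i, j) (liebr mul X (evec j)) i 0.

(* bivectors (elements of g /\ g) are skew matrices; ad_X P = M_X P + P M_X^T *)
Definition cocycle (R : realType) (N : nat) (mul : 'cV[R]_N -> 'cV[R]_N -> 'cV[R]_N)
  (delta : 'cV[R]_N -> 'M[R]_N) : Prop :=
  forall X Y, delta (liebr mul X Y) =
      admx mul X *m delta Y + delta Y *m (admx mul X)^T
    - (admx mul Y *m delta X + delta X *m (admx mul Y)^T).

(* the dual bracket delta^* on g^* (covectors = row vectors):
   [xi,eta](Z) = <xi (x) eta, delta(Z)> *)
Definition cobr (R : realType) (N : nat) (delta : 'cV[R]_N -> 'M[R]_N)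
  (xi eta : 'rV[R]_N) : 'rV[R]_N :=
  \row_k (xi *m delta (evec k) *m eta^T) 0 0.

Definition lie_bialgebra (R : realType) (N : nat)
  (mul : 'cV[R]_N -> 'cV[R]_N -> 'cV[R]_N) (delta : 'cV[R]_N -> 'M[R]_N) : Prop :=
  [/\ forall (a : R) X Y, delta (a *: X + Y) = a *: delta X + delta Y,
      forall X, (delta X)^T = - delta X,
      cocycle mul delta
    & forall xi eta zeta,
        cobr delta (cobr delta xi eta) zeta + cobr delta (cobr delta eta zeta) xi
        + cobr delta (cobr delta zeta xi) eta = 0].

(* H^* inside g^* = H^* (+) V^* : covectors vanishing on V *)
Definition Hcovec (R : realType) (n m : nat) (xi : 'rV[R]_n) : 'rV[R]_(n + m) :=
  row_mx xi 0.

Definition hcoord (R : realType) (n m : nat) (xi : 'rV[R]_n) (x : 'cV[R]_(n + m)) : R :=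
  (xi *m usubmx x) 0 0.

From HB Require Import structures.
From mathcomp Require Import all_boot all_order all_algebra.
From mathcomp Require Import all_classical all_reals all_analysis.
Import Order.TTheory GRing.Theory Num.Theory.
Import numFieldNormedType.Exports.
Local Open Scope ring_scope.
Local Open Scope classical_set_scope.

(* On the H x H block, multiplicativity of pi reduces to F (x * y) = F x + F y:
   the H-component of the product is h + h', so the H-rows of the Jacobians of
   both translations are unit rows.  Thus each H x H entry F of pi is a
   homomorphism to (R, +); its differential at the unit is the corresponding
   entry of delta, which vanishes because H^* is an abelian subalgebra of g^*.
   A homomorphism with zero differential is zero along every one-parameter
   subgroup, and every (h, v) is the product (h, 0) * (0, rho1(h)^-1 v) of points
   on the one-parameter subgroups t (h, 0) and t (0, w).  Finally the
   functions h^i only see the H-coordinates, so {h^i, h^j} only involves the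
   H x H block of pi. *)

Section linear_derive.
Context {R : realType} {U V W : normedModType R}.

Lemma is_derive_linear (L : V -> W) a v : linear L -> is_derive a v L (L v).
Proof.
move=> linL.
have Lv : (fun h : R => h^-1 *: ((L \o shift a) (h *: v) - L a)) @ 0^' --> L v.
  apply: cvg_near_cst; near=> h.
  rewrite /= linL addrK scalerA mulVf ?scale1r //; near: h.
  exact: nbhs_dnbhs_neq.
by split; [apply/cvg_ex; exists (L v) | apply: cvg_lim].
Unshelve. all: by end_near. Qed.

Lemma derivable_linear (L : V -> W) a v : linear L -> derivable L a v.
Proof. by move=> linL; case: (is_derive_linear L a v linL). Qed.

Lemma is_derive_comp_linear {f : U -> W} {L : V -> U} {a v df} :
  linear L -> is_derive (L a) (L v) f df -> is_derive a v (f \o L) df.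
Proof.
move=> linL [fd fD].
have quotE : (fun h : R => h^-1 *: ((f \o L \o shift a) (h *: v) - (f \o L) a))
    = (fun h : R => h^-1 *: ((f \o shift (L a)) (h *: L v) - f (L a))).
  by apply/funext => h /=; rewrite linL.
by split; rewrite /derivable /derive quotE.
Qed.

End linear_derive.

Lemma additive_is_derive0_eq0 (R : realType) (psi : R -> R) :
  {morph psi : s t / s + t} -> is_derive (0 : R) (1 : R) psi 0 -> psi 1 = 0.
Proof.
move=> psiD [dpsi Dpsi].
have psi0 : psi 0 = 0 by apply/(addrI (psi 0)); rewrite -psiD !addr0.
have psiMn k s : psi (k%:R * s) = k%:R * psi s.
  elim: k => [|k IH]; first by rewrite !mul0r psi0.
  by rewrite -addn1 !natrD !mulrDl !mul1r psiD IH.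
have : (fun h : R => h^-1 *: ((psi \o shift 0) (h *: 1) - psi 0)) @ 0^' --> 0.
  by move: dpsi; rewrite /derivable -/(derive psi 0 1) Dpsi.
rewrite (_ : (fun h : R => _) = (fun h => h^-1 * psi h)); last first.
  by apply/funext => h /=; rewrite addr0 psi0 subr0 -[h *: 1]/(h * 1) mulr1.
move=> /(cvgr0Pnorm_lt _).1 /(_ `|psi 1|) small_quot.
apply/eqP/negPn/negP => psi1_neq0.
move: small_quot; rewrite normr_gt0 psi1_neq0 => /(_ isT) /nbhs_ballP[e /= e_gt0 small].
pose N := Num.truncn e^-1; pose s : R := N.+1%:R^-1.
have s_neq0 : s != 0 by rewrite invr_eq0 pnatr_eq0.
have : ball 0 e s.
  rewrite /ball /= sub0r normrN ger0_norm ?invr_ge0 //.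
  by rewrite -[e]invrK ltf_pV2 ?posrE ?invr_gt0 // truncnS_gt.
move=> /small /(_ s_neq0) /=.
(* additivity makes the difference quotient at s = 1/(N+1) equal to psi 1 *)
have -> : s^-1 * psi s = psi 1.
  by rewrite -[in RHS](@divff _ N.+1%:R) ?pnatr_eq0 // psiMn invrK.
by rewrite ltxx.
Qed.

Lemma mx_coord_linear (R : realType) p q (i : 'I_p) (j : 'I_q) :
  linear (fun A : 'M[R]_(p, q) => A i j).
Proof. by move=> a A B; rewrite !mxE. Qed.

Section matrix_derivable.
Context {R : realType} {V : normedModType R}.

Lemma derivable_col_mx p1 p2 q (A : V -> 'M[R]_(p1, q)) (B : V -> 'M[R]_(p2, q)) x v :
  derivable A x v -> derivable B x v -> derivable (fun t => col_mx (A t) (B t)) x v.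
Proof.
move=> /derivable_mxP dA /derivable_mxP dB; apply/derivable_mxP => i j.
case: (split_ordP i) => [k ->|k ->].
- by rewrite (_ : (fun t => _) = (fun t => A t k j)) //; apply/funext => t; rewrite col_mxEu.
- by rewrite (_ : (fun t => _) = (fun t => B t k j)) //; apply/funext => t; rewrite col_mxEd.
Qed.

Lemma derivable_mulmx p q r (A : V -> 'M[R]_(p, q)) (B : V -> 'M[R]_(q, r)) x v :
  derivable A x v -> derivable B x v -> derivable (fun t => A t *m B t) x v.
Proof.
move=> /derivable_mxP dA /derivable_mxP dB; apply/derivable_mxP => i j.
rewrite (_ : (fun t => _) = (fun t => \sum_k A t i k * B t k j)); last first.
  by apply/funext => t; rewrite mxE.
rewrite -fct_sumE; apply: derivable_sum => k.
exact: derivableM.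
Qed.

End matrix_derivable.

Lemma jac_unit_row {R : realType} {N} {F : 'cV[R]_N -> 'cV[R]_N} {x a} c :
  (forall v, derivable F x v) -> (forall t, F t a 0 = c + t a 0) ->
  forall k, jac F x a k = (a == k)%:R.
Proof.
move=> dF Fa k; rewrite /jac mxE derive_mx // mxE (funext Fa).
have [dcoord Dcoord] :=
  is_derive_linear (fun t : 'cV[R]_N => t a 0) x (evec k) (@mx_coord_linear R _ _ a 0).
by rewrite deriveD // derive_cst add0r Dcoord /evec mxE andbT eq_sym.
Qed.

Lemma mulmx_tr_unit_rows {R : realType} {p q N} {A : 'M[R]_(p, N)} {B : 'M[R]_(q, N)}
    (P : 'M[R]_N) {a b c d} :
  (forall k, A a k = (c == k)%:R) -> (forall k, B b k = (d == k)%:R) ->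
  (A *m P *m B^T) a b = P c d.
Proof.
move=> Aa Bb; rewrite mxE (bigD1 d) //= big1 => [|l /negbTE ld]; last first.
  by rewrite !mxE Bb eq_sym ld mulr0.
rewrite !mxE Bb eqxx mulr1 addr0 (bigD1 c) //= big1 => [|k /negbTE kc].
  by rewrite Aa eqxx mul1r addr0.
by rewrite Aa eq_sym kc mul0r.
Qed.

Lemma linear_evec_eq0 (R : realType) N (W : lmodType R) (f : 'cV[R]_N -> W) :
  linear f -> (forall k, f (evec k) = 0) -> forall z, f z = 0.
Proof.
move=> linf f_evec z.
pose fL : {linear 'cV[R]_N -> W} := HB.pack f (GRing.isLinear.Build _ _ _ _ f linf).
rewrite -[f z]/(fL z) (matrix_sum_delta z) linear_sum big1 // => k _.
by rewrite big_ord1 linearZ /= -/(evec k) f_evec scaler0.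
Qed.

Lemma rep_invmx (R : realType) n m (rho : 'cV[R]_n -> 'M[R]_m) :
  is_rep rho -> forall h, invmx (rho h) = rho (- h).
Proof.
move=> [rho_unit rho0 rhoD _] h.
have : rho h *m rho (- h) = 1%:M by rewrite -rhoD subrr rho0.
by move=> /(congr1 (mulmx (invmx (rho h)))); rewrite mulKmx ?rho_unit // mulmx1.
Qed.

Lemma derivable_rep_comp {R : realType} {V : normedModType R} {n m}
    {rho : 'cV[R]_n -> 'M[R]_m} {L : V -> 'cV[R]_n} {a v} :
  is_rep rho -> linear L -> derivable (fun t => rho (L t)) a v.
Proof.
move=> [_ _ _ rho_smooth] linL.
have drho : derivable rho (L a) (L v) by apply: diff_derivable; exact: (rho_smooth 0%N).
by case: (is_derive_comp_linear linL (derivableP drho)).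
Qed.

Lemma usubmx_linear (R : realType) n m : linear (@usubmx R n m 1).
Proof. exact: linearP. Qed.

Lemma opp_usubmx_linear (R : realType) n m : linear (fun x : 'cV[R]_(n + m) => - usubmx x).
Proof. by move=> a x y; rewrite linearP opprD scalerN. Qed.

Lemma delta_HH_eq0 (R : realType) n m (delta : 'cV[R]_(n + m) -> 'M[R]_(n + m)) :
  linear delta ->
  (forall xi eta : 'rV[R]_n, cobr delta (Hcovec m xi) (Hcovec m eta) = 0) ->
  forall z i j, delta z (lshift m i) (lshift m j) = 0.
Proof.
move=> delta_lin H_abelian z i j.
apply: (@linear_evec_eq0 R _ _ (fun z => delta z (lshift m i) (lshift m j))) => [a u w|k].
  by rewrite delta_lin !mxE.
(* the H x H entries of delta z are the values on z of the dual brackets of basis covectors *)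
have Hcovec_unit (c : 'I_n) l : Hcovec m (delta_mx 0 c) 0 l = (lshift m c == l)%:R :> R.
  case: (split_ordP l) => [l' ->|l' ->]; rewrite /Hcovec.
    by rewrite row_mxEl mxE eq_lshift eq_sym.
  by rewrite row_mxEr mxE eq_lrshift.
have := congr1 (fun M : 'rV[R]_(n + m) => M 0 k) (H_abelian (delta_mx 0 i) (delta_mx 0 j)).
by rewrite /cobr mxE (mulmx_tr_unit_rows _ (Hcovec_unit i) (Hcovec_unit j)) mxE.
Qed.

Section semidirect_product.
Context {R : realType} {n m : nat} {rho1 rho2 : 'cV[R]_n -> 'M[R]_m}.
Hypotheses (rep1 : is_rep rho1) (rep2 : is_rep rho2).
Local Notation mul := (gmul rho1 rho2).

Lemma gmulE x y : mul x y = col_mx (usubmx x + usubmx y)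
  (rho1 (usubmx x) *m dsubmx y + rho2 (- usubmx y) *m dsubmx x).
Proof. by rewrite /gmul rep_invmx. Qed.

Lemma derivable_gmulr x y v : derivable (mul x) y v.
Proof.
rewrite (funext (gmulE x)); apply: derivable_col_mx.
  by apply: derivableD; [exact: derivable_cst | exact/derivable_linear/usubmx_linear].
apply: derivableD; apply: derivable_mulmx.
- exact: derivable_cst.
- exact/derivable_linear/linearP.
- exact: derivable_rep_comp rep2 (opp_usubmx_linear R n m).
- exact: derivable_cst.
Qed.

Lemma derivable_gmull x y v : derivable (mul^~ y) x v.
Proof.
rewrite (funext (gmulE^~ y)); apply: derivable_col_mx.
  by apply: derivableD; [exact/derivable_linear/usubmx_linear | exact: derivable_cst].
apply: derivableD; apply: derivable_mulmx.
- exact: derivable_rep_comp rep1 (usubmx_linear R n m).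
- exact: derivable_cst.
- exact: derivable_cst.
- exact/derivable_linear/linearP.
Qed.

Lemma jac_gmulr_lshift x y i : forall k, jac (mul x) y (lshift m i) k = (lshift m i == k)%:R.
Proof.
apply: (jac_unit_row (x (lshift m i) 0)) => [v|t]; first exact: derivable_gmulr.
by rewrite /gmul col_mxEu !mxE.
Qed.

Lemma jac_gmull_lshift x y i : forall k, jac (mul^~ y) x (lshift m i) k = (lshift m i == k)%:R.
Proof.
apply: (jac_unit_row (y (lshift m i) 0)) => [v|t]; first exact: derivable_gmull.
by rewrite /gmul col_mxEu !mxE addrC.
Qed.

Lemma pi_HH_gmul (pi : 'cV[R]_(n + m) -> 'M[R]_(n + m)) :
  pl_multiplicative mul pi -> forall x y i j,
  pi (mul x y) (lshift m i) (lshift m j)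
  = pi x (lshift m i) (lshift m j) + pi y (lshift m i) (lshift m j).
Proof.
move=> pi_mul x y i j; rewrite pi_mul mxE addrC.
congr (_ + _).
- exact (mulmx_tr_unit_rows (pi x) (jac_gmull_lshift x y i) (jac_gmull_lshift x y j)).
- exact (mulmx_tr_unit_rows (pi y) (jac_gmulr_lshift x y i) (jac_gmulr_lshift x y j)).
Qed.

Lemma gmul_Hline (h : 'cV[R]_n) (s t : R) :
  mul (s *: col_mx h 0) (t *: col_mx h 0) = (s + t) *: col_mx h 0.
Proof.
by rewrite /gmul !scale_col_mx !scaler0 !col_mxKu !col_mxKd !mulmx0 addr0 scalerDl.
Qed.

Lemma gmul_Vline (w : 'cV[R]_m) (s t : R) :
  mul (s *: col_mx 0 w) (t *: col_mx 0 w) = (s + t) *: col_mx 0 w.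
Proof.
have [_ rho1_0 _ _] := rep1; have [_ rho2_0 _ _] := rep2.
rewrite /gmul !scale_col_mx !scaler0 !col_mxKu !col_mxKd addr0 rho1_0 rho2_0.
by rewrite invmx1 !mul1mx scalerDl addrC.
Qed.

Lemma gmul_HV x :
  mul (col_mx (usubmx x) 0) (col_mx 0 (invmx (rho1 (usubmx x)) *m dsubmx x)) = x.
Proof.
have [rho1_unit _ _ _] := rep1; have [_ rho2_0 _ _] := rep2.
rewrite /gmul !col_mxKu !col_mxKd !addr0 rho2_0 invmx1 mulmx0 addr0.
by rewrite mulmxA mulmxV ?rho1_unit // mul1mx vsubmxK.
Qed.

Lemma gmul_hom_oneparam_eq0 (F : 'cV[R]_(n + m) -> R) z :
  {morph F : x y / mul x y >-> x + y} ->
  (forall s t : R, mul (s *: z) (t *: z) = (s + t) *: z) ->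
  is_derive 0 z F 0 -> F z = 0.
Proof.
move=> F_mul z_line dF.
have linz : linear (fun s : R => s *: z) by move=> a s t; rewrite scalerDl scalerA.
rewrite -[z]scale1r; apply: (@additive_is_derive0_eq0 R (fun s => F (s *: z))).
  by move=> s t; rewrite -z_line F_mul.
by apply: (is_derive_comp_linear linz); rewrite scale0r scale1r.
Qed.

Lemma gmul_hom_eq0 (F : 'cV[R]_(n + m) -> R) :
  {morph F : x y / mul x y >-> x + y} -> (forall z, is_derive 0 z F 0) ->
  forall x, F x = 0.
Proof.
move=> F_mul dF x; rewrite -(gmul_HV x) F_mul.
by rewrite !gmul_hom_oneparam_eq0 ?addr0 //; [exact: gmul_Vline | exact: gmul_Hline].
Qed.

Lemma pi_HH_eq0 {delta pi : 'cV[R]_(n + m) -> 'M[R]_(n + m)} :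
  linear delta ->
  (forall xi eta : 'rV[R]_n, cobr delta (Hcovec m xi) (Hcovec m eta) = 0) ->
  smooth pi -> pl_multiplicative mul pi -> (forall X, 'D_X pi 0 = delta X) ->
  forall x i j, pi x (lshift m i) (lshift m j) = 0.
Proof.
move=> delta_lin H_abelian pi_smooth pi_mul pi_lin x i j.
apply: (gmul_hom_eq0 (fun x => pi x (lshift m i) (lshift m j))) => [y w|z].
  exact: pi_HH_gmul.
have dpi : derivable pi 0 z by apply: diff_derivable; exact: (pi_smooth 0%N).
split; first exact: (derivable_mxP pi 0 z).1.
have := congr1 (fun M : 'M[R]_(n + m) => M (lshift m i) (lshift m j)) (derive_mx dpi).
by rewrite mxE pi_lin => <-; exact: delta_HH_eq0.
Qed.

End semidirect_product.

Lemma hcoord_linear (R : realType) n m (xi : 'rV[R]_n) : linear (@hcoord R n m xi).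
Proof. by move=> a x y; rewrite /hcoord linearP mulmxDr -scalemxAr !mxE. Qed.

Lemma hcoord_evec_rshift (R : realType) n m (xi : 'rV[R]_n) (l : 'I_m) :
  @hcoord R n m xi (evec (rshift n l)) = 0.
Proof. by rewrite /hcoord /evec mxE big1 // => k _; rewrite !mxE eq_lrshift mulr0. Qed.

Theorem lemma1 (R : realType) (n m : nat)
  (rho1 rho2 : 'cV[R]_n -> 'M[R]_m)
  (rep1 : is_rep rho1) (rep2 : is_rep rho2)
  (comm : forall h h', rho1 h *m rho2 h' = rho2 h' *m rho1 h)
  (delta : 'cV[R]_(n + m) -> 'M[R]_(n + m))
  (bialg : lie_bialgebra (gmul rho1 rho2) delta)
  (Habelian : forall xi eta : 'rV[R]_n,
      cobr delta (Hcovec m xi) (Hcovec m eta) = 0)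
  (pi : 'cV[R]_(n + m) -> 'M[R]_(n + m))
  (Hpoisson : poisson_bivector pi)
  (Hmult : pl_multiplicative (gmul rho1 rho2) pi)
  (Hlin : forall X, 'D_X pi 0 = delta X) :
  forall xi eta : 'rV[R]_n,
    pbr pi (@hcoord R n m xi) (@hcoord R n m eta) = fun _ => 0.
Proof.
move=> xi eta; apply/funext => x.
have [delta_lin _ _ _] := bialg; have [pi_smooth _ _] := Hpoisson.
have pi_HH := pi_HH_eq0 rep1 rep2 delta_lin Habelian pi_smooth Hmult Hlin x.
have Dh xi' v : 'D_v (@hcoord R n m xi') x = hcoord xi' v.
  by case: (is_derive_linear _ x v (hcoord_linear R n m xi')).
rewrite /pbr big1 // => k _; apply: big1 => l _; rewrite !Dh.
case: (split_ordP k) => [i ->|i ->]; last by rewrite hcoord_evec_rshift !mul0r.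
case: (split_ordP l) => [j ->|j ->]; last by rewrite hcoord_evec_rshift mulr0.
by rewrite pi_HH mulr0 mul0r.
Qed.
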